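(* For all integers $k\ge3$ and $n\ge k$ there exist a connected unweighted graph $G$ on $n$ vertices, $k$ singleton groups $R_1=\{r_1\},\dots,R_k=\{r_k\}$ and a source vertex $s$ such that every spanning subgraph $H$ of $G$ satisfying $\sigma_H(s,t)\le\alpha\,\sigma_G(s,t)$ for all $t\in V$ with some $\alpha<2-\frac{2}{k}$ has at least $n$ edges.
   Context: Unweighted means every edge has weight $1$. Paths are walks; lengths count edge weights with multiplicity. A group Steiner path from $s$ to $t$ is a path from $s$ to $t$ containing at least one vertex of each group $R_i$; $\sigma_X(s,t)$ is the minimum length of such a path in graph $X$ (with $s=t$ allowed). *)

From mathcomp Require Import all_boot all_order all_algebra.
From mathcomp Require Export reals.
Set Implicit Arguments. Unset Strict Implicit. Unset Printing Implicit Defensive.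

Definition simple_graph (n : nat) (e : rel 'I_n) : Prop :=
  symmetric e /\ irreflexive e.

Definition connected_graph (n : nat) (e : rel 'I_n) : Prop :=
  forall x y, connect e x y.

Definition spanning_subgraph (n : nat) (H G : rel 'I_n) : Prop :=
  simple_graph H /\ (forall x y, H x y -> G x y).

Definition num_edges (n : nat) (e : rel 'I_n) : nat :=
  #|[set p : 'I_n * 'I_n | (p.1 < p.2)%N && e p.1 p.2]|.

(* A walk from s to t is s :: p with path e s p and last s p = t; its length
   (number of edges, unweighted) is size p.  It is a group Steiner path for
   singleton groups R_i = {r i} if every r i occurs among its vertices. *)
Definition group_steiner_walk (n k : nat) (e : rel 'I_n) (r : 'I_k -> 'I_n)
    (s t : 'I_n) (p : seq 'I_n) : Prop :=
  path e s p /\ last s p = t /\ (forall i, r i \in s :: p).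

Definition is_sigma (n k : nat) (e : rel 'I_n) (r : 'I_k -> 'I_n)
    (s t : 'I_n) (d : nat) : Prop :=
  (exists p, group_steiner_walk e r s t p /\ size p = d) /\
  (forall p, group_steiner_walk e r s t p -> (d <= size p)%N).

From mathcomp Require Import all_boot all_order all_algebra reals.
From mathcomp Require Import zify ring lra.

Set Implicit Arguments.
Unset Strict Implicit.
Unset Printing Implicit Defensive.

(* G is the lollipop graph: the terminals 0, ..., k-1 form a cycle, and the
   remaining vertices k, ..., n-1 form a path hanging from s = 0; it has n
   edges, so it suffices to show that H keeps every edge of G.
   A tail edge is a bridge separating s from its far endpoint t, so a walk
   from s to t in H needs it.  If H drops a cycle edge xy, the distance along
   the cycle cut open at xy (tail vertices sitting at 0) is 1-Lipschitz on H
   and differs by k-1 at x and y, so a closed walk from s visiting both has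
   length at least 2(k-1), while the cycle itself is such a walk of length k
   in G; and 2(k-1) > alpha k whenever alpha < 2 - 2/k. *)

Section LipschitzWalks.
Variables (T : eqType) (e : rel T) (f : T -> nat).
Hypothesis f_lipschitz : forall u v, e u v -> `|f u - f v| <= 1.

Lemma path_dist_last x p : path e x p -> `|f x - f (last x p)| <= size p.
Proof.
elim: p x => [|y p IHp] x /=; first by rewrite distnn.
by case/andP=> /f_lipschitz exy /IHp; lia.
Qed.

Lemma path_dist_mem x p u : path e x p -> u \in x :: p ->
  `|f x - f u| + `|f u - f (last x p)| <= size p.
Proof.
move=> + u_p; case/splitPl: u_p => p1 p2 last_p1.
rewrite cat_path last_cat size_cat last_p1 => /andP[/path_dist_last].
by rewrite last_p1 => + /path_dist_last; lia.
Qed.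

Lemma closed_path_dist x p u w : path e x p -> last x p = x ->
  u \in x :: p -> w \in x :: p -> 2 * `|f u - f w| <= size p.
Proof.
move=> + + u_p; case/splitPl: u_p => p1 p2 last_p1.
rewrite cat_path last_cat size_cat last_p1 => /andP[e_p1 e_p2] closed.
rewrite -cat_cons mem_cat => /orP[w_p1|w_p2].
- have := path_dist_mem e_p1 w_p1; have := path_dist_last e_p2.
  by rewrite last_p1 closed; lia.
- have w_p2' : w \in u :: p2 by rewrite inE w_p2 orbT.
  have := path_dist_mem e_p2 w_p2'; have := path_dist_last e_p1.
  by rewrite last_p1 closed; lia.
Qed.

End LipschitzWalks.

Definition lollipop_adj (k a b : nat) : bool :=
  [|| (a.+1 == b) && (b != k), (a == 0) && (b == k.-1) | (a == 0) && (b == k)].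

Definition lollipop (k m : nat) : rel 'I_m :=
  fun x y => lollipop_adj k x y || lollipop_adj k y x.
Arguments lollipop k {m}.

(* The cycle is cut open at the edge xy between c and c + 1 (mod k), where
   c = k-1 for the closing edge {0, k-1}; cut_dist counts the steps from c + 1
   going away from c, and gives tail vertices the value of 0. *)
Definition cut_dist (k x y v : nat) : nat :=
  let c := if y == x.+1 then x else k.-1 in
  if v < k then (if c < v then v - c.+1 else v + k - c.+1) else k - c.+1.

Lemma lollipop_adj_lt k a b : 1 < k -> lollipop_adj k a b -> a < b.
Proof. by rewrite /lollipop_adj; lia. Qed.

Lemma cut_dist_lipschitz k x y u v : 2 < k -> y < k ->
  lollipop_adj k x y -> lollipop_adj k u v -> (u, v) != (x, y) ->
  `|cut_dist k x y u - cut_dist k x y v| <= 1.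
Proof.
rewrite /lollipop_adj /cut_dist xpair_eqE => k_gt2 y_lt.
by repeat case: ifP; lia.
Qed.

Lemma cut_dist_cut k x y : 2 < k -> y < k -> lollipop_adj k x y ->
  `|cut_dist k x y x - cut_dist k x y y| = k.-1.
Proof. by rewrite /lollipop_adj /cut_dist => k_gt2 y_lt; repeat case: ifP; lia. Qed.

Lemma lollipop_adj_bridge k x y u v : 1 < k -> k <= y ->
  lollipop_adj k x y -> lollipop_adj k u v -> u < y <= v -> u = x /\ v = y.
Proof. by rewrite /lollipop_adj; lia. Qed.

Lemma leq_num_edges m (e1 e2 : rel 'I_m) :
  (forall x y, e1 x y -> e2 x y) -> num_edges e1 <= num_edges e2.
Proof.
move=> sub12; apply/subset_leq_card/subsetP => p.
by rewrite !inE => /andP[-> /sub12].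
Qed.

Section Lollipop.
Variables (k n : nat).
Hypotheses (k_gt2 : 2 < k) (k_le : k <= n.+1).

Local Notation G := (@lollipop k n.+1).
Local Notation r := (widen_ord k_le).

Lemma lollipop_simple : simple_graph G.
Proof.
split=> [x y|x]; first by rewrite /lollipop orbC.
by rewrite /lollipop orbb; apply/negP => /(lollipop_adj_lt (ltnW k_gt2)); rewrite ltnn.
Qed.

Lemma lollipop_inord a b : a < n.+1 -> b < n.+1 -> lollipop_adj k a b ->
  G (inord a) (inord b).
Proof. by move=> a_lt b_lt adj_ab; rewrite /lollipop !inordK // adj_ab. Qed.

Lemma lollipop_connected : connected_graph G.
Proof.
have from0 m : m < n.+1 -> connect G ord0 (inord m).
  elim: m => [|m IHm] m_lt; first by rewrite -[ord0]inord_val.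
  have [m1_k|m1_k] := eqVneq m.+1 k.
    rewrite -[ord0]inord_val connect1 // lollipop_inord //.
    by rewrite /lollipop_adj m1_k !eqxx !orbT.
  apply: connect_trans (IHm (ltnW m_lt)) (connect1 _).
  by rewrite lollipop_inord ?(ltnW m_lt) // /lollipop_adj eqxx m1_k.
move=> x y; apply: (@connect_trans _ _ ord0).
  rewrite (sym_connect_sym lollipop_simple.1).
  by rewrite -[x]inord_val from0.
by rewrite -[y]inord_val from0.
Qed.

Lemma lollipop_num_edges : n.+1 <= num_edges G.
Proof.
pose pred_v (v : nat) := if v == 0 then k.-1 else if v == k then 0 else v.-1.
pose edge_of (v : 'I_n.+1) : 'I_n.+1 * 'I_n.+1 :=
  (inord (minn (pred_v v) v), inord (maxn (pred_v v) v)).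
have pred_lt (v : 'I_n.+1) : pred_v v < n.+1.
  by have := ltn_ord v; rewrite /pred_v; repeat case: ifP; lia.
have edge_of_inj : injective edge_of.
  move=> u v [/(congr1 val) eq_min /(congr1 val) eq_max]; apply: val_inj.
  move: eq_min eq_max; rewrite /= !inordK ?gtn_min ?gtn_max ?pred_lt ?ltn_ord //.
  by have := ltn_ord u; have := ltn_ord v; rewrite /pred_v; repeat case: ifP; lia.
rewrite -[X in X <= _]card_ord -cardsT -(card_imset _ edge_of_inj).
apply/subset_leq_card/subsetP => _ /imsetP[v _ ->].
rewrite inE /lollipop /= !inordK ?gtn_min ?gtn_max ?pred_lt ?ltn_ord //.
by have := ltn_ord v; rewrite /pred_v /lollipop_adj; repeat case: ifP; lia.
Qed.

Lemma lollipop_tour : exists p, group_steiner_walk G r ord0 ord0 p /\ size p = k.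
Proof.
pose p := mkseq (fun i => inord (i.+1 %% k) : 'I_n.+1) k.
have nth_p i : i <= k -> nth ord0 (ord0 :: p) i = inord (i %% k).
  case: i => [|i] i_le /=; first by rewrite mod0n -[ord0]inord_val.
  by rewrite nth_mkseq.
exists p; split; last exact: size_mkseq.
split; [|split].
- apply/(pathP ord0) => i; rewrite size_mkseq => i_lt.
  rewrite nth_p ?(ltnW i_lt) // nth_mkseq // (modn_small i_lt) /lollipop.
  have [i1_k|i1_k] := eqVneq i.+1 k.
    by rewrite i1_k modnn !inordK /lollipop_adj; lia.
  by rewrite modn_small ?inordK /lollipop_adj; lia.
- by rewrite (last_nth ord0) size_mkseq nth_p // modnn -[ord0]inord_val.
- move=> i; rewrite inE; apply/orP; have [i0|i_pos] := posnP i.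
    by left; apply/eqP/val_inj; rewrite /= i0.
  have i_lt := ltn_ord i.
  right; apply/mapP; exists i.-1; first by rewrite mem_iota; lia.
  by apply/val_inj; rewrite /= prednK // modn_small // inordK; lia.
Qed.

Variable H : rel 'I_n.+1.
Hypothesis H_sub : spanning_subgraph H G.

Lemma terminal_mem (v : 'I_n.+1) p : v < k -> (forall i, r i \in ord0 :: p) ->
  v \in ord0 :: p.
Proof. by move=> v_lt /(_ (Ordinal v_lt)); congr (_ \in _ :: _); apply: val_inj. Qed.

Lemma tour_avoiding_cycle_edge (x y : 'I_n.+1) p : y < k -> lollipop_adj k x y ->
  ~~ H x y -> group_steiner_walk H r ord0 ord0 p -> 2 * k.-1 <= size p.
Proof.
move: H_sub => [[H_sym _] H_G] y_lt adj_xy nHxy [H_p [closed terms]].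
have x_lt : x < k := ltn_trans (lollipop_adj_lt (ltnW k_gt2) adj_xy) y_lt.
have lip (u v : 'I_n.+1) : H u v -> `|cut_dist k x y u - cut_dist k x y v| <= 1.
  move=> Huv; case/orP: (H_G _ _ Huv) => [adj_uv|adj_vu].
  - apply: cut_dist_lipschitz adj_uv _ => //.
    by apply: contraNneq nHxy => -[/val_inj <- /val_inj <-].
  - rewrite distnC; apply: cut_dist_lipschitz adj_vu _ => //.
    by apply: contraNneq nHxy => -[/val_inj <- /val_inj <-]; rewrite H_sym.
have := closed_path_dist lip H_p closed (terminal_mem x_lt terms) (terminal_mem y_lt terms).
by rewrite cut_dist_cut.
Qed.

Lemma tail_edge_kept (x y : 'I_n.+1) p : k <= y -> lollipop_adj k x y ->
  group_steiner_walk H r ord0 y p -> H x y.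
Proof.
move: H_sub => [[H_sym _] H_G] y_ge adj_xy [H_p [last_p _]].
apply/negPn/negP => nHxy.
have no_cross (u v : 'I_n.+1) : H u v -> u < y <= v -> False.
  move=> Huv uyv; case/orP: (H_G _ _ Huv) => [adj_uv|/lollipop_adj_lt adj_vu].
  - have [/val_inj eux /val_inj evy] := lollipop_adj_bridge (ltnW k_gt2) y_ge adj_xy adj_uv uyv.
    by move: Huv; rewrite eux evy (negbTE nHxy).
  - by have := adj_vu (ltnW k_gt2); lia.
have closed_below : closed H [pred v : 'I_n.+1 | v < y].
  move=> u v Huv; rewrite !inE.
  have [u_lt|u_ge] := ltnP u y; have [v_lt|v_ge] := ltnP v y => //.
  - by case: (no_cross u v Huv); rewrite u_lt v_ge.
  - by case: (no_cross v u); rewrite 1?H_sym ?v_lt.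
have := closed_connect closed_below (path_connect H_p (mem_last ord0 p)).
by rewrite last_p !inE /= ltnn; lia.
Qed.

End Lollipop.

Import Order.TTheory GRing.Theory Num.Theory.
Local Open Scope ring_scope.

Lemma stretch_lt_detour (R : realFieldType) (k dH dG : nat) (alpha : R) :
  (1 < k)%N -> (2 * k.-1 <= dH)%N -> (dG <= k)%N -> alpha < 2 - 2 / k%:R ->
  alpha * dG%:R < dH%:R.
Proof.
move=> k_gt1 dH_ge dG_le alpha_lt.
have k_gt1R : 1 < k%:R :> R by rewrite ltr1n.
have k_gt0 : 0 < k%:R :> R by lra.
have detour : 2 * k%:R - 2 <= dH%:R :> R.
  have kE : k%:R = k.-1%:R + 1 :> R by rewrite natr1 prednK // ltnW.
  by move: dH_ge; rewrite -(ler_nat R) natrM; lra.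
have stretch_k : alpha * k%:R < 2 * k%:R - 2.
  have -> : 2 * k%:R - 2 = (2 - 2 / k%:R) * k%:R :> R.
    by field; rewrite gt_eqF.
  by rewrite ltr_pM2r.
have dG_le' : dG%:R <= k%:R :> R by rewrite ler_nat.
have [alpha_ge0|alpha_lt0] := lerP 0 alpha.
- by have := ler_wpM2l alpha_ge0 dG_le'; lra.
- have : alpha * dG%:R <= 0 by rewrite mulr_le0_ge0 // ltW.
  lra.
Qed.

Theorem mainTheorem12 (R : realType) (k n : nat) :
  (3 <= k)%N -> (k <= n)%N ->
  exists (G : rel 'I_n) (r : 'I_k -> 'I_n) (s : 'I_n),
    [/\ simple_graph G, connected_graph G, injective r &
      forall H : rel 'I_n, spanning_subgraph H G ->
        (exists alpha : R, alpha < 2 - 2 / k%:R /\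
           forall t : 'I_n, exists dH dG : nat,
             [/\ is_sigma H r s t dH, is_sigma G r s t dG &
                 dH%:R <= alpha * dG%:R]) ->
        (n <= num_edges H)%N].
Proof.
move=> k_gt2; case: n => [|n] k_le; first by case: k k_gt2 k_le.
exists (lollipop k), (widen_ord k_le), ord0; split.
- exact: lollipop_simple.
- exact: lollipop_connected.
- by move=> i j /(congr1 val) /= /val_inj.
move=> H H_sub [alpha [alpha_lt sigma_le]].
apply: leq_trans (lollipop_num_edges k_gt2 k_le) (leq_num_edges _) => x y.
have [[H_sym _] _] := H_sub.
suff adj_kept (u v : 'I_n.+1) : lollipop_adj k u v -> H u v.
  by case/orP=> [/adj_kept | /adj_kept]; rewrite 1?H_sym.
move=> adj_uv; have [v_lt|v_ge] := ltnP v k.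
- apply/negPn/negP => nHuv.
  have [dH [dG [[[p [walk <-]] _] [_ minG] dH_le]]] := sigma_le ord0.
  have dG_le : (dG <= k)%N by have [q [/minG + <-]] := lollipop_tour k_gt2 k_le.
  have := stretch_lt_detour (ltnW k_gt2)
    (tour_avoiding_cycle_edge k_gt2 H_sub v_lt adj_uv nHuv walk) dG_le alpha_lt.
  by rewrite ltNge dH_le.
- have [_ [_ [[[p [walk _]] _] _ _]]] := sigma_le v.
  by apply: tail_edge_kept walk.
Qed.
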